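(* For every instance such that $|S_2|>\pi_1+\pi_3+\pi_4-1$, $|S_2|\ge 3$ and $|S_2|$ is odd, we have $H^{PW''}\le \tfrac{24}{13}H^*$.
   Context: An instance consists of an integer $n\ge 1$ and growth rates $1=h(1)\ge h(2)\ge\cdots\ge h(n)>0$ of bamboos $b_1,\dots,b_n$. Bamboo Garden Trimming (discrete version): - All heights are $0$ initially. - On each day $t=1,2,\dots$ every bamboo $b_j$ grows by $h(j)$. - At the end of each day the gardener cuts exactly one bamboo $\sigma(t)\in\{1,\dots,n\}$ back to height $0$. The height of a schedule $\sigma:\mathbb{N}\to\{1,\dots,n\}$ is the supremum, over all days $t$ and all $j$, of the height of $b_j$ at the end of day $t$ just before the cut. $H^*$ denotes the infimum of this height over all schedules. Value of algorithm PW'': - Split $\{1,\dots,n\}$ into four sets: - $S_1=\{j: \tfrac23<h(j)\le 1\}$; - $S_2=\{j:\tfrac12<h(j)\le\tfrac23\}$; - $S_3=\{j: h(j)\le\tfrac12 \text{ and } \tfrac23 2^{-k}<h(j)\le 2^{-k}\text{ for some integer }k\ge1\}$; - $S_4=\{j: h(j)\le\tfrac12\text{ and } 2^{-(k+1)}<h(j)\le \tfrac23 2^{-k}\text{ for some integer }k\ge 1\}$. - Modified growths: $h''(j)=2^{-k}$ for $j\in S_3$ and $h''(j)=\tfrac23 2^{-k}$ for $j\in S_4$, with $k$ as in the definition of the set. - Let $\pi_1=|S_1|$, $sh_3=\sum_{j\in S_3}h''(j)$, $sh_4=\sum_{j\in S_4}h''(j)$, $\pi_3=\lfloor sh_3\rfloor$,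 $\pi_4=\lfloor sh_4\rfloor$, $f_3=sh_3-\pi_3$, $f_4=sh_4-\pi_4$. - Option (a): $\pi_R(a)=\lceil f_3+f_4\rceil$ and $z(a)=\pi_1+|S_2|+\pi_3+\pi_4+\pi_R(a)$. - Option (b): if $S_2=\emptyset$ put $z(b)=+\infty$. Otherwise let $h^*=\max_{j\in S_2}h(j)$ and $f_2=\tfrac12$ if $|S_2|$ is odd, $f_2=0$ if $|S_2|$ is even. Then $\pi_R(b)=\lceil f_2+f_3+f_4\rceil$ and $z(b)=2h^*\,(\pi_1+\lfloor |S_2|/2\rfloor+\pi_3+\pi_4+\pi_R(b))$. - The value returned by algorithm PW'' is $H^{PW''}=\min\{z(a),z(b)\}$. The paper takes this as the maximum height of the periodic pinwheel trimming schedule that it builds from these partitions. *)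

From Stdlib Require Import Reals Lra Lia ZArith Arith List ClassicalEpsilon.
Open Scope R_scope.

(** * Instances: growth rates h(1..n), indices 1..n (h j for j outside is irrelevant). *)
Definition instance (n : nat) (h : nat -> R) : Prop :=
  (1 <= n)%nat /\ h 1%nat = 1 /\
  (forall j, (1 <= j < n)%nat -> h (S j) <= h j) /\
  (forall j, (1 <= j <= n)%nat -> 0 < h j).

Definition valid_schedule (n : nat) (sigma : nat -> nat) : Prop :=
  forall t, (1 <= t)%nat -> (1 <= sigma t <= n)%nat.

(* height of bamboo j at the end of day t, after the cut of day t *)
Fixpoint height_after (h : nat -> R) (sigma : nat -> nat) (j t : nat) : R :=
  match t with
  | O => 0
  | S t' => if Nat.eqb (sigma (S t')) j then 0
            else height_after h sigma j t' + h j
  end.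

Definition height_before (h : nat -> R) (sigma : nat -> nat) (j t : nat) : R :=
  height_after h sigma j (t - 1) + h j.

Definition heights (n : nat) (h : nat -> R) (sigma : nat -> nat) (x : R) : Prop :=
  exists t j, (1 <= t)%nat /\ (1 <= j <= n)%nat /\ x = height_before h sigma j t.

Definition schedule_height (n : nat) (h : nat -> R) (sigma : nat -> nat) (H : R) : Prop :=
  is_lub (heights n h sigma) H.

Definition is_glb (E : R -> Prop) (m : R) : Prop :=
  (forall x, E x -> m <= x) /\ (forall b, (forall x, E x -> b <= x) -> b <= m).

Definition is_Hstar (n : nat) (h : nat -> R) (Hs : R) : Prop :=
  is_glb (fun H => exists sigma, valid_schedule n sigma /\ schedule_height n h sigma H) Hs.

Definition Rleb (x y : R) : bool := if Rle_dec x y then true else false.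
Definition Rltb (x y : R) : bool := if Rlt_dec x y then true else false.

Definition lvl (x : R) : nat :=
  epsilon (inhabits 0%nat) (fun k => (/2) ^ (S k) < x <= (/2) ^ k).

Definition inS1 (h : nat -> R) (j : nat) : bool := Rltb (2/3) (h j) && Rleb (h j) 1.
Definition inS2 (h : nat -> R) (j : nat) : bool := Rltb (1/2) (h j) && Rleb (h j) (2/3).
Definition inS3 (h : nat -> R) (j : nat) : bool :=
  Rleb (h j) (1/2) && Rltb (2/3 * (/2) ^ lvl (h j)) (h j).
Definition inS4 (h : nat -> R) (j : nat) : bool :=
  Rleb (h j) (1/2) && Rleb (h j) (2/3 * (/2) ^ lvl (h j)).

Definition idx (n : nat) : list nat := List.seq 1 n.

Definition card (n : nat) (P : nat -> bool) : nat := length (filter P (idx n)).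

Definition sumR (n : nat) (P : nat -> bool) (f : nat -> R) : R :=
  fold_right (fun j acc => (if P j then f j else 0) + acc) 0 (idx n).

Definition hpp3 (h : nat -> R) (j : nat) : R := (/2) ^ lvl (h j).
Definition hpp4 (h : nat -> R) (j : nat) : R := 2/3 * (/2) ^ lvl (h j).

Definition Rfloor (x : R) : Z := Int_part x.
Definition Rceil (x : R) : Z := (- Int_part (- x))%Z.

Definition pi1 n h : nat := card n (inS1 h).
Definition s2 n h : nat := card n (inS2 h).
Definition sh3 n h : R := sumR n (inS3 h) (hpp3 h).
Definition sh4 n h : R := sumR n (inS4 h) (hpp4 h).
Definition pi3 n h : Z := Rfloor (sh3 n h).
Definition pi4 n h : Z := Rfloor (sh4 n h).
Definition f3 n h : R := sh3 n h - IZR (pi3 n h).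
Definition f4 n h : R := sh4 n h - IZR (pi4 n h).

Definition z_a n h : R :=
  INR (pi1 n h) + INR (s2 n h) + IZR (pi3 n h) + IZR (pi4 n h)
  + IZR (Rceil (f3 n h + f4 n h)).

Definition hstar2 n h : R :=
  fold_right (fun j acc => Rmax (h j) acc) 0 (filter (inS2 h) (idx n)).

Definition f2 n h : R := if Nat.odd (s2 n h) then 1/2 else 0.

(* only meaningful when S2 is nonempty *)
Definition z_b n h : R :=
  2 * hstar2 n h *
  (INR (pi1 n h) + INR (Nat.div2 (s2 n h)) + IZR (pi3 n h) + IZR (pi4 n h)
   + IZR (Rceil (f2 n h + f3 n h + f4 n h))).

(* z(b) = +infinity when S2 is empty *)
Definition H_PW (n : nat) (h : nat -> R) : R :=
  if Nat.eqb (s2 n h) 0 then z_a n h else Rmin (z_a n h) (z_b n h).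

(* The height of any schedule is at least sum_j h(j): every day the total height of the
   garden grows by sum_j h(j) minus the height of the cut bamboo, while it stays bounded
   by n times the height of the schedule.  Splitting this sum by classes, a bamboo of S1
   weighs at least 2/3 (and b_1 weighs 1 = 2/3 + 1/3), a bamboo of S3 or S4 at least 2/3
   of its rounded rate h'', and S2 weighs at least h* + (|S2| - 1)/2.  With
   m = pi1 + pi3 + pi4 <= |S2| = 2q + 1 and F = f3 + f4 < 2, the claim becomes
   min(m + 2q + 1 + ceil F, 2h*(m + q + ceil(F + 1/2))) <= 24/13 (2m/3 + 1/3 + h* + q + 2F/3),
   which is checked for each of the finitely many values of the two ceilings. *)
From Stdlib Require Import Reals Lra Lia ZArith List ClassicalEpsilon.
Open Scope R_scope.

Definition lsum (l : list nat) (f : nat -> R) : R :=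
  fold_right (fun j acc => f j + acc) 0 l.

Definition lmax (l : list nat) (f : nat -> R) : R :=
  fold_right (fun j acc => Rmax (f j) acc) 0 l.

Lemma lsum_add l f g : lsum l (fun j => f j + g j) = lsum l f + lsum l g.
Proof. induction l; simpl; [lra|]. rewrite IHl; lra. Qed.

Lemma lsum_scal l c f : lsum l (fun j => c * f j) = c * lsum l f.
Proof. induction l; simpl; [lra|]. rewrite IHl; lra. Qed.

Lemma lsum_const l c : lsum l (fun _ => c) = INR (length l) * c.
Proof.
  induction l; simpl length; [simpl; lra|].
  rewrite S_INR. simpl. rewrite IHl. lra.
Qed.

Lemma lsum_le l f g : (forall j, In j l -> f j <= g j) -> lsum l f <= lsum l g.
Proof.
  induction l; intros Hfg; simpl; [lra|].
  assert (f a <= g a) by (apply Hfg; left; auto).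
  assert (lsum l f <= lsum l g) by (apply IHl; intros; apply Hfg; right; auto).
  lra.
Qed.

Lemma lsum_nonneg l f : (forall j, In j l -> 0 <= f j) -> 0 <= lsum l f.
Proof.
  intros Hf. replace 0 with (lsum l (fun _ => 0)) at 1.
  - now apply lsum_le.
  - rewrite lsum_const; lra.
Qed.

Lemma lsum_filter l (P : nat -> bool) f :
  lsum (filter P l) f = lsum l (fun j => if P j then f j else 0).
Proof. induction l; simpl; auto. destruct (P a); simpl; rewrite IHl; lra. Qed.

Lemma lsum_skip_notin l k g : ~ In k l ->
  lsum l (fun j => if Nat.eqb k j then 0 else g j) = lsum l g.
Proof.
  induction l as [|a l IH]; intros Hk; simpl; auto.
  destruct (Nat.eqb_spec k a) as [->|]; [exfalso; apply Hk; left; auto|].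
  rewrite IH; auto. intro; apply Hk; right; auto.
Qed.

Lemma lsum_remove l k g : NoDup l -> In k l ->
  lsum l (fun j => if Nat.eqb k j then 0 else g j) = lsum l g - g k.
Proof.
  induction l as [|a l IH]; intros Hnd Hk; [destruct Hk|].
  inversion Hnd as [|? ? Ha Hnd']; subst. simpl.
  destruct (Nat.eqb_spec k a) as [->|Hne].
  - rewrite lsum_skip_notin by auto. lra.
  - destruct Hk as [Hk|Hk]; [congruence|]. rewrite IH; auto. lra.
Qed.

Lemma lsum_ge_lmax l f a : l <> nil -> 0 <= a -> (forall j, In j l -> a <= f j) ->
  lmax l f + (INR (length l) - 1) * a <= lsum l f.
Proof.
  induction l as [|b l IH]; intros Hl Ha Hf; [congruence|].
  assert (Hb : a <= f b) by (apply Hf; left; auto).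
  simpl length. rewrite S_INR.
  change (lmax (b :: l) f) with (Rmax (f b) (lmax l f)).
  change (lsum (b :: l) f) with (f b + lsum l f).
  destruct l as [|c l'].
  - change (lmax nil f) with 0. change (lsum nil f) with 0. simpl. rewrite Rmax_left; lra.
  - assert (Hsum : INR (length (c :: l')) * a <= lsum (c :: l') f).
    { rewrite <- lsum_const. apply lsum_le. intros; apply Hf; right; auto. }
    assert (IHl := IH ltac:(discriminate) Ha (fun j Hj => Hf j (or_intror Hj))).
    apply Rmax_case_strong; intros; lra.
Qed.

Lemma lmax_bounds l f a b : l <> nil -> 0 <= b -> (forall j, In j l -> a < f j <= b) ->
  a < lmax l f <= b.
Proof.
  induction l as [|c l IH]; intros Hl Hb Hf; [congruence|].
  assert (Hc := Hf c (or_introl eq_refl)).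
  change (lmax (c :: l) f) with (Rmax (f c) (lmax l f)).
  destruct l as [|d l'].
  - change (lmax nil f) with 0. apply Rmax_case_strong; intros; lra.
  - assert (IHl := IH ltac:(discriminate) Hb (fun j Hj => Hf j (or_intror Hj))).
    apply Rmax_case_strong; intros; lra.
Qed.

Lemma in_idx n j : In j (idx n) <-> (1 <= j <= n)%nat.
Proof. unfold idx. rewrite in_seq. lia. Qed.

Lemma idx_succ n : idx (S n) = 1%nat :: seq 2 n.
Proof. reflexivity. Qed.

Lemma height_before_succ h sigma j t :
  height_before h sigma j (S t) = height_after h sigma j t + h j.
Proof. unfold height_before. now rewrite Nat.sub_succ, Nat.sub_0_r. Qed.

Lemma total_height_step n h sigma H t :
  valid_schedule n sigma -> (forall x, heights n h sigma x -> x <= H) ->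
  lsum (idx n) (fun j => height_after h sigma j t) + lsum (idx n) h - H
  <= lsum (idx n) (fun j => height_after h sigma j (S t)).
Proof.
  intros Hv Hub. set (k := sigma (S t)).
  assert (Hk : (1 <= k <= n)%nat) by (apply Hv; lia).
  change (lsum (idx n) (fun j => height_after h sigma j (S t)))
    with (lsum (idx n) (fun j => if Nat.eqb k j then 0 else height_after h sigma j t + h j)).
  rewrite lsum_remove, lsum_add by (apply seq_NoDup || apply in_idx; auto).
  assert (height_after h sigma k t + h k <= H).
  { rewrite <- height_before_succ. apply Hub. exists (S t), k. repeat split; auto; lia. }
  lra.
Qed.

Lemma total_height_bound n h sigma H t :
  (forall j, (1 <= j <= n)%nat -> 0 < h j) -> (forall x, heights n h sigma x -> x <= H) ->
  lsum (idx n) (fun j => height_after h sigma j t) <= INR n * H.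
Proof.
  intros Hpos Hub.
  replace (INR n * H) with (lsum (idx n) (fun _ => H))
    by (rewrite lsum_const; unfold idx; now rewrite length_seq).
  apply lsum_le. intros j Hj. apply in_idx in Hj.
  assert (height_before h sigma j (S t) <= H).
  { apply Hub. exists (S t), j. repeat split; auto; lia. }
  rewrite height_before_succ in *. specialize (Hpos j Hj). lra.
Qed.

Lemma sum_rates_le_schedule_height n h sigma H :
  (forall j, (1 <= j <= n)%nat -> 0 < h j) -> valid_schedule n sigma ->
  (forall x, heights n h sigma x -> x <= H) ->
  lsum (idx n) h <= H.
Proof.
  intros Hpos Hv Hub.
  set (total t := lsum (idx n) (fun j => height_after h sigma j t)).
  set (D := lsum (idx n) h - H).
  assert (Hgrowth : forall t, INR t * D <= total t).
  { induction t as [|t IH].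
    - unfold total. simpl. replace (lsum (idx n) (fun _ => 0)) with 0; [lra|].
      rewrite lsum_const; lra.
    - rewrite S_INR. pose proof (total_height_step n h sigma H t Hv Hub). unfold total, D in *. lra. }
  destruct (Rle_dec (lsum (idx n) h) H) as [|Hgt]; auto. exfalso.
  assert (HD : 0 < D) by (unfold D; lra).
  destruct (INR_unbounded (INR n * H / D)) as [T HT].
  assert (INR n * H < INR T * D).
  { apply (Rmult_lt_compat_r D) in HT; auto. unfold Rdiv in HT.
    rewrite Rmult_assoc, Rinv_l in HT; lra. }
  pose proof (Hgrowth T). pose proof (total_height_bound n h sigma H T Hpos Hub).
  unfold total in *. lra.
Qed.

Lemma sum_rates_le_Hstar n h Hs :
  instance n h -> is_Hstar n h Hs -> lsum (idx n) h <= Hs.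
Proof.
  intros (_ & _ & _ & Hpos) (_ & Hglb). apply Hglb.
  intros x (sigma & Hv & Hub & _).
  now apply (sum_rates_le_schedule_height n h sigma).
Qed.

Lemma instance_rate_le_1 n h j : instance n h -> (1 <= j <= n)%nat -> h j <= 1.
Proof.
  intros (_ & H1 & Hdec & _). induction j as [|j IH]; intros Hj; [lia|].
  destruct j as [|j]; [rewrite H1; lra|].
  assert (h (S (S j)) <= h (S j)) by (apply Hdec; lia).
  assert (h (S j) <= 1) by (apply IH; lia). lra.
Qed.

Lemma lvl_spec x : 0 < x <= 1 -> (/2) ^ S (lvl x) < x <= (/2) ^ lvl x.
Proof.
  intros Hx. unfold lvl. apply epsilon_spec.
  destruct (pow_lt_1_zero (/2) ltac:(rewrite Rabs_pos_eq; lra) x ltac:(lra)) as [N HN].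
  specialize (HN N (le_n N)). rewrite Rabs_pos_eq in HN by (apply pow_le; lra).
  assert (Hdown : forall M, (/2) ^ S M < x -> exists k, (/2) ^ S k < x <= (/2) ^ k).
  { induction M as [|M IH]; intros HM.
    - exists 0%nat. simpl. lra.
    - destruct (Rle_dec x ((/2) ^ S M)); [exists (S M); auto|].
      apply IH. lra. }
  apply (Hdown N). simpl. pose proof (pow_le (/2) N ltac:(lra)). lra.
Qed.

Definition class_weight (h : nat -> R) (j : nat) : R :=
  2/3 * (if inS1 h j then 1 else 0) + (if inS2 h j then h j else 0)
  + 2/3 * (if inS3 h j then hpp3 h j else 0) + 2/3 * (if inS4 h j then hpp4 h j else 0).

Lemma class_weight_le_rate h j : 0 < h j <= 1 -> class_weight h j <= h j.
Proof.
  intros Hj. pose proof (lvl_spec (h j) Hj) as Hlvl.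
  unfold class_weight, inS1, inS2, inS3, inS4, hpp3, hpp4, Rltb, Rleb.
  set (p := (/2) ^ lvl (h j)) in *. simpl in Hlvl. fold p in Hlvl.
  assert (0 < p) by (apply pow_lt; lra).
  repeat destruct (Rlt_dec _ _); repeat destruct (Rle_dec _ _); simpl; lra.
Qed.

Lemma class_weight_first h : h 1%nat = 1 -> class_weight h 1 = 2/3.
Proof.
  intros H1. unfold class_weight, inS1, inS2, inS3, inS4, Rltb, Rleb. rewrite H1.
  repeat destruct (Rlt_dec _ _); repeat destruct (Rle_dec _ _); simpl; lra.
Qed.

Lemma sum_class_weights n h :
  lsum (idx n) (class_weight h) =
  2/3 * INR (pi1 n h) + lsum (filter (inS2 h) (idx n)) h + 2/3 * sh3 n h + 2/3 * sh4 n h.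
Proof.
  unfold class_weight, pi1, card. rewrite !lsum_add, !lsum_scal, !lsum_filter.
  rewrite <- (Rmult_1_r (INR _)), <- lsum_const, lsum_filter.
  reflexivity.
Qed.

Lemma sum_rates_ge_class_weights n h : instance n h ->
  1/3 + 2/3 * INR (pi1 n h) + lsum (filter (inS2 h) (idx n)) h + 2/3 * sh3 n h + 2/3 * sh4 n h
  <= lsum (idx n) h.
Proof.
  intros Hinst. pose proof (sum_class_weights n h) as Hw.
  enough (1/3 + lsum (idx n) (class_weight h) <= lsum (idx n) h) by lra.
  pose proof Hinst as (Hn & H1 & _ & Hpos).
  destruct n as [|n]; [lia|]. rewrite idx_succ. simpl lsum.
  rewrite class_weight_first, H1 by auto.
  assert (lsum (seq 2 n) (class_weight h) <= lsum (seq 2 n) h); [|lra].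
  apply lsum_le. intros j Hj. apply in_seq in Hj.
  apply class_weight_le_rate. split.
  - apply Hpos; lia.
  - apply (instance_rate_le_1 (S n)); auto; lia.
Qed.

Lemma pi1_ge_1 n h : instance n h -> (1 <= pi1 n h)%nat.
Proof.
  intros (Hn & H1 & _). destruct n as [|n]; [lia|].
  unfold pi1, card. rewrite idx_succ. simpl.
  replace (inS1 h 1) with true; [simpl; lia|].
  unfold inS1, Rltb, Rleb. rewrite H1.
  repeat destruct (Rlt_dec _ _); repeat destruct (Rle_dec _ _); simpl; auto; lra.
Qed.

Lemma S2_sum_ge n h : (0 < s2 n h)%nat ->
  1/2 < hstar2 n h <= 2/3 /\ hstar2 n h + (INR (s2 n h) - 1) / 2 <= lsum (filter (inS2 h) (idx n)) h.
Proof.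
  intros Hs2. set (L := filter (inS2 h) (idx n)).
  assert (HL : L <> nil).
  { intro E. unfold s2, card in Hs2. fold L in Hs2. rewrite E in Hs2. simpl in Hs2. lia. }
  assert (Hrates : forall j, In j L -> 1/2 < h j <= 2/3).
  { intros j Hj. apply filter_In in Hj. destruct Hj as [_ Hj].
    unfold inS2, Rltb, Rleb in Hj.
    destruct (Rlt_dec _ _), (Rle_dec _ _); simpl in Hj; try discriminate; lra. }
  split.
  - apply (lmax_bounds L h); auto; lra.
  - pose proof (lsum_ge_lmax L h (1/2) HL ltac:(lra) ltac:(intros j Hj; specialize (Hrates j Hj); lra)).
    unfold hstar2, s2, card. fold L. fold (lmax L h). lra.
Qed.

Lemma Rfloor_frac r : 0 <= r -> 0 <= IZR (Rfloor r) /\ 0 <= r - IZR (Rfloor r) < 1.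
Proof.
  intros Hr. unfold Rfloor. destruct (base_Int_part r) as [Hlo Hhi].
  assert (-1 < Int_part r)%Z by (apply lt_IZR; simpl; lra).
  assert (0 <= IZR (Int_part r)) by (apply IZR_le; lia). lra.
Qed.

Lemma Rceil_bounds y : y <= IZR (Rceil y) < y + 1.
Proof. unfold Rceil. rewrite opp_IZR. destruct (base_Int_part (- y)). lra. Qed.

Lemma pi3_f3_bounds n h : 0 <= IZR (pi3 n h) /\ 0 <= f3 n h < 1.
Proof.
  apply Rfloor_frac, lsum_nonneg. intros j _. destruct (inS3 h j); [|lra].
  apply pow_le; lra.
Qed.

Lemma pi4_f4_bounds n h : 0 <= IZR (pi4 n h) /\ 0 <= f4 n h < 1.
Proof.
  apply Rfloor_frac, lsum_nonneg. intros j _. destruct (inS4 h j); [|lra].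
  unfold hpp4. pose proof (pow_le (/2) (lvl (h j)) ltac:(lra)). lra.
Qed.

Lemma pinwheel_ratio_bound (m q x F : R) (c c' : Z) :
  1 <= m -> 1 <= q -> m <= 2 * q + 1 -> 1/2 < x <= 2/3 -> 0 <= F < 2 ->
  F <= IZR c < F + 1 -> F + 1/2 <= IZR c' < F + 3/2 ->
  Rmin (m + (2 * q + 1) + IZR c) (2 * x * (m + q + IZR c'))
  <= 24/13 * (2/3 * m + 1/3 + x + q + 2/3 * F).
Proof.
  intros Hm Hq Hmq Hx HF Hc Hc'.
  assert (Ec : (c = 0 \/ c = 1 \/ c = 2)%Z).
  { assert (-1 < c)%Z by (apply lt_IZR; lra). assert (c < 3)%Z by (apply lt_IZR; lra). lia. }
  assert (Ec' : (c' = 1 \/ c' = 2 \/ c' = 3)%Z).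
  { assert (0 < c')%Z by (apply lt_IZR; lra). assert (c' < 4)%Z by (apply lt_IZR; lra). lia. }
  apply Rmin_case_strong; intros Hmin;
    destruct Ec as [-> | [-> | ->]]; destruct Ec' as [-> | [-> | ->]]; simpl in *; nra.
Qed.

Lemma Hstar_ge_class_bound n h Hs : instance n h -> is_Hstar n h Hs -> (0 < s2 n h)%nat ->
  2/3 * (INR (pi1 n h) + IZR (pi3 n h) + IZR (pi4 n h)) + 1/3 + hstar2 n h
  + (INR (s2 n h) - 1) / 2 + 2/3 * (f3 n h + f4 n h) <= Hs.
Proof.
  intros Hinst Hstar Hs2.
  pose proof (sum_rates_le_Hstar n h Hs Hinst Hstar).
  pose proof (sum_rates_ge_class_weights n h Hinst).
  pose proof (S2_sum_ge n h Hs2).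
  unfold f3, f4. lra.
Qed.

Lemma INR_odd_div2 k : Nat.odd k = true -> INR k = 2 * INR (Nat.div2 k) + 1.
Proof.
  intros Hodd. rewrite (Nat.div2_odd k) at 1. rewrite Hodd.
  rewrite plus_INR, mult_INR. simpl. lra.
Qed.

Lemma z_b_odd n h : Nat.odd (s2 n h) = true ->
  z_b n h = 2 * hstar2 n h * (INR (pi1 n h) + IZR (pi3 n h) + IZR (pi4 n h)
                              + INR (Nat.div2 (s2 n h)) + IZR (Rceil (f3 n h + f4 n h + 1/2))).
Proof.
  intros Hodd. assert (Hf2 : f2 n h = 1/2) by (unfold f2; now rewrite Hodd).
  unfold z_b. rewrite Hf2.
  replace (1/2 + f3 n h + f4 n h) with (f3 n h + f4 n h + 1/2) by ring. ring.
Qed.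

Theorem proposition4 (n : nat) (h : nat -> R) (Hs : R) :
  instance n h ->
  is_Hstar n h Hs ->
  (Z.of_nat (s2 n h) > Z.of_nat (pi1 n h) + pi3 n h + pi4 n h - 1)%Z ->
  (3 <= s2 n h)%nat ->
  Nat.odd (s2 n h) = true ->
  H_PW n h <= 24 / 13 * Hs.
Proof.
  intros Hinst Hstar Hgap Hs2 Hodd.
  set (m := INR (pi1 n h) + IZR (pi3 n h) + IZR (pi4 n h)).
  set (q := INR (Nat.div2 (s2 n h))).
  set (F := f3 n h + f4 n h).
  assert (Hs2q : INR (s2 n h) = 2 * q + 1) by now apply INR_odd_div2.
  pose proof (pi3_f3_bounds n h). pose proof (pi4_f4_bounds n h).
  assert (Hm : 1 <= m <= 2 * q + 1).
  { pose proof (le_INR _ _ (pi1_ge_1 n h Hinst)) as H1. simpl in H1.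
    assert (m <= INR (s2 n h)); [|unfold m in *; lra].
    unfold m. rewrite !INR_IZR_INZ, <- !plus_IZR. apply IZR_le. lia. }
  assert (Hq : 1 <= q).
  { pose proof (le_INR 3 _ Hs2) as H3. rewrite Hs2q in H3. simpl in H3. lra. }
  assert (HF : 0 <= F < 2) by (unfold F; lra).
  destruct (S2_sum_ge n h ltac:(lia)) as [Hx _].
  pose proof (Hstar_ge_class_bound n h Hs Hinst Hstar ltac:(lia)) as Hlow.
  unfold H_PW. replace (Nat.eqb (s2 n h) 0) with false by (symmetry; apply Nat.eqb_neq; lia).
  replace (z_a n h) with (m + (2 * q + 1) + IZR (Rceil F))
    by (unfold z_a, m, F; rewrite <- Hs2q; ring).
  rewrite z_b_odd by auto. fold m q F.
  eapply Rle_trans.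
  - pose proof (Rceil_bounds F). pose proof (Rceil_bounds (F + 1/2)).
    apply (pinwheel_ratio_bound m q (hstar2 n h) F); [tauto .. | split; lra].
  - rewrite Hs2q in Hlow. unfold m, F in *. lra.
Qed.
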